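(* Let $\mathcal E=\widetilde{\Omega^1_D}(\mathcal A)$ be the bimodule of one-forms of a spectral triple $(\mathcal A,\mathcal H,D)$ and suppose Assumption III$'$ holds with data $\mathcal A'\subseteq\mathcal Z(\mathcal A)$, $\mathcal E'\subseteq\mathcal Z(\mathcal E)$. Then $\mathcal Z(\mathcal E)\cong\mathcal E'\otimes_{\mathcal A'}\mathcal Z(\mathcal A)$.
   Context: $\mathcal E$ is the span in $B(\mathcal H)$ of $a[D,b]$, $a,b\in\mathcal A$; $\mathcal Z(\mathcal E)=\{e:ea=ae\ \forall a\}$; $\mathcal Z(\mathcal A)$ the center. Assumption III$'$: there exist a unital $*$-subalgebra $\mathcal A'$ of $\mathcal Z(\mathcal A)$ and an $\mathcal A'$-submodule $\mathcal E'$ of $\mathcal Z(\mathcal E)$ such that $\mathcal E'$ is finitely generated projective over $\mathcal A'$ and the map $\mathcal E'\otimes_{\mathcal A'}\mathcal A\to\mathcal E$, $\sum_ie_i\otimes a_i\mapsto\sum_ie_ia_i$, is an isomorphism of vector spaces. *)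

From HB Require Import structures.
From mathcomp Require Import all_boot all_order all_algebra.
Set Implicit Arguments. Unset Strict Implicit. Unset Printing Implicit Defensive.
Import Order.TTheory GRing.Theory Num.Theory.
Local Open Scope ring_scope.

(* Ambient algebra B over a field K: stands for B(H) (or any algebra of
   operators containing A and D).  Subsets of B are predicates B -> Prop. *)
Section Defs.
Variables (K : fieldType) (B : algType K).

Definition commutator (D b : B) : B := D * b - b * D.

Definition is_subalg (S : B -> Prop) : Prop :=
  [/\ S 1, (forall x y, S x -> S y -> S (x + y)),
      (forall (k : K) x, S x -> S (k *: x)) &
      (forall x y, S x -> S y -> S (x * y))].

Definition one_forms (A : B -> Prop) (D : B) : B -> Prop := fun x =>
  exists s : seq (K * (B * B)),
    (forall t, t \in s -> A t.2.1 /\ A t.2.2) /\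
    x = \sum_(t <- s) t.1 *: (t.2.1 * commutator D t.2.2).

Definition centralizer_in (A M : B -> Prop) : B -> Prop := fun m =>
  M m /\ forall a, A a -> m * a = a * m.

(* ---------- algebraic tensor product  P (x)_S Q, P, Q, S subsets of B ----
   Elements of the free abelian group on B * B are represented by formal
   integer combinations (seq (int * (B * B))); two such are equal in the free
   group iff they have the same coefficient function [fcoeff]. *)
Definition fsum := seq (int * (B * B)).

Definition fcoeff (s : fsum) (k : B * B) : int :=
  \sum_(x <- s | x.2 == k) x.1.

Definition supported (P Q : B -> Prop) (s : fsum) : Prop :=
  forall x, x \in s -> P x.2.1 /\ Q x.2.2.

Definition fmul (s : fsum) : B := \sum_(x <- s) (x.2.1 * x.2.2) *~ x.1.

(* generators of the relations defining P (x)_S Q (S acting on P on the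
   right and on Q on the left by multiplication in B) *)
Inductive tensor_rel (P S Q : B -> Prop) : fsum -> Prop :=
| trel_addl e1 e2 a : P e1 -> P e2 -> Q a ->
    tensor_rel P S Q [:: (1, (e1 + e2, a)); (-1, (e1, a)); (-1, (e2, a))]
| trel_addr e a1 a2 : P e -> Q a1 -> Q a2 ->
    tensor_rel P S Q [:: (1, (e, a1 + a2)); (-1, (e, a1)); (-1, (e, a2))]
| trel_bal e c a : P e -> S c -> Q a ->
    tensor_rel P S Q [:: (1, (e * c, a)); (-1, (e, c * a))].

(* s represents 0 in P (x)_S Q : s lies in the subgroup of the free abelian
   group generated by the relations *)
Definition tensor_zero (P S Q : B -> Prop) (s : fsum) : Prop :=
  exists rs : seq (int * fsum),
    (forall r, r \in rs -> tensor_rel P S Q r.2) /\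
    forall k, fcoeff s k = \sum_(r <- rs) r.1 * fcoeff r.2 k.

(* the map P (x)_S Q -> M induced by multiplication is a (well-defined)
   bijection onto M *)
Definition mult_iso (P S Q M : B -> Prop) : Prop :=
  [/\ (forall s, supported P Q s -> M (fmul s)),
      (forall x, M x -> exists s, supported P Q s /\ fmul s = x) &
      (forall s, supported P Q s -> fmul s = 0 -> tensor_zero P S Q s)].

(* E' is a finitely generated projective S-module: a retract of S^n,
   i.e. there are S-linear maps sigma = (phi_j) : E' -> S^n and
   pi : S^n -> E', pi(c) = sum_j c_j e_j, with pi o sigma = id. *)
Definition fg_projective (S P : B -> Prop) : Prop :=
  exists (n : nat) (es : 'I_n -> B) (phi : 'I_n -> B -> B),
    [/\ (forall j, P (es j)),
        (forall j x, P x -> S (phi j x)),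
        (forall j x y, P x -> P y -> phi j (x + y) = phi j x + phi j y),
        (forall j c x, S c -> P x -> phi j (c * x) = c * phi j x) &
        (forall x, P x -> x = \sum_(j < n) phi j x * es j)].

Definition is_submodule (S P : B -> Prop) : Prop :=
  [/\ P 0, (forall x y, P x -> P y -> P (x + y)) &
      (forall c x, S c -> P x -> P (c * x))].

End Defs.

From HB Require Import structures.
From mathcomp Require Import all_boot all_order all_algebra.
From mathcomp Require Import ring.
Import Order.TTheory GRing.Theory Num.Theory.
Local Open Scope ring_scope.
Set Implicit Arguments. Unset Strict Implicit.

(* Let e_j and phi_j be generators and coordinate functionals of the
   projective A'-module E'.  As E' is central and A' commutative, each map
   e (x) z |-> phi_j(e) z is balanced, so it induces coord_j on E' (x)_{A'} A;
   and, over any coefficient set stable under A', every tensor s is congruent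
   to its expansion sum_j e_j (x) coord_j(s).  If x = fmul s lies in Z(E), then
   coord_j(s) a - a coord_j(s) is coord_j of a tensor representing
   x a - a x = 0, which vanishes by injectivity over A; so the expansion of s
   is a preimage of x in E' (x) Z(A).  If fmul s = 0 with s over Z(A),
   injectivity over A kills every coord_j(s), hence the expansion of s is zero
   in E' (x)_{A'} Z(A). *)

Section FormalSums.
Variables (K : fieldType) (B : algType K).
Implicit Types (s t : fsum B) (k : B * B) (m : int) (g : B -> B -> B).

Definition fscale m s : fsum B := [seq (m * x.1, x.2) | x <- s].

Lemma fcoeff_nil k : fcoeff (B := B) [::] k = 0.
Proof. by rewrite /fcoeff big_nil. Qed.

Lemma fcoeff_cons x s k :
  fcoeff (x :: s) k = (if x.2 == k then x.1 else 0) + fcoeff s k.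
Proof. by rewrite /fcoeff big_cons; case: ifP; rewrite ?add0r. Qed.

Lemma fcoeff_cat s t k : fcoeff (s ++ t) k = fcoeff s k + fcoeff t k.
Proof. by rewrite /fcoeff big_cat. Qed.

Lemma fcoeff_scale m s k : fcoeff (fscale m s) k = m * fcoeff s k.
Proof.
elim: s => [|x s IH]; first by rewrite /fscale !fcoeff_nil mulr0.
by rewrite /fscale map_cons !fcoeff_cons -/(fscale m s) IH /=; case: ifP => _; ring.
Qed.

Lemma fcoeff_flatten (L : seq (fsum B)) k :
  fcoeff (flatten L) k = \sum_(s <- L) fcoeff s k.
Proof.
elim: L => [|s L IH]; first by rewrite big_nil fcoeff_nil.
by rewrite /= fcoeff_cat IH big_cons.
Qed.

Definition feval g s : B := \sum_(x <- s) g x.2.1 x.2.2 *~ x.1.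

Lemma feval_cat g s t : feval g (s ++ t) = feval g s + feval g t.
Proof. by rewrite /feval big_cat. Qed.

Lemma feval_scale g m s : feval g (fscale m s) = feval g s *~ m.
Proof.
rewrite /feval /fscale big_map mulrz_suml.
by apply: eq_bigr => x _; rewrite mulrzA_C.
Qed.

Lemma feval_flatten g (L : seq (fsum B)) :
  feval g (flatten L) = \sum_(s <- L) feval g s.
Proof.
elim: L => [|s L IH]; first by rewrite /feval !big_nil.
by rewrite /= feval_cat IH big_cons.
Qed.

Lemma feval_fcoeff g s (L : seq (B * B)) :
  uniq L -> {subset map snd s <= L} ->
  feval g s = \sum_(k <- L) g k.1 k.2 *~ fcoeff s k.
Proof.
move=> uL; elim: s => [|x s IH] sL.
  by rewrite /feval big_nil big1 // => k _; rewrite fcoeff_nil mulr0z.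
have xL : x.2 \in L by apply: sL; rewrite inE eqxx.
rewrite /feval big_cons -/(feval g s) IH; last by move=> y ys; apply: sL; rewrite inE ys orbT.
under [RHS]eq_bigr => k _ do rewrite fcoeff_cons mulrzDr.
rewrite big_split /=; congr (_ + _).
rewrite (bigD1_seq x.2) //= eqxx big1 ?addr0 // => k /negbTE.
by rewrite eq_sym => ->; rewrite mulr0z.
Qed.

Lemma feval_ext g s t : fcoeff s =1 fcoeff t -> feval g s = feval g t.
Proof.
move=> st; pose L := undup (map snd (s ++ t)).
have sub_st u : {subset u <= s ++ t} -> {subset map snd u <= L}.
  by move=> ust _ /mapP [x /ust xst ->]; rewrite mem_undup map_f.
rewrite (@feval_fcoeff g s L) ?(@feval_fcoeff g t L) ?undup_uniq //.
- by apply: eq_bigr => k _; rewrite st.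
- by apply: sub_st => x xt; rewrite mem_cat xt orbT.
- by apply: sub_st => x xs; rewrite mem_cat xs.
Qed.

Lemma fmulE s : fmul s = feval *%R s.
Proof. by []. Qed.

Definition fcomm (a : B) s : fsum B :=
  [seq (x.1, (x.2.1, x.2.2 * a)) | x <- s] ++
  [seq (- x.1, (x.2.1, a * x.2.2)) | x <- s].

Lemma feval_fcomm g a s :
  {in s, forall x, g x.2.1 (x.2.2 * a) = g x.2.1 x.2.2 * a /\
                   g x.2.1 (a * x.2.2) = a * g x.2.1 x.2.2} ->
  feval g (fcomm a s) = feval g s * a - a * feval g s.
Proof.
move=> ga; rewrite feval_cat /feval !big_map mulr_suml mulr_sumr -sumrN.
by congr (_ + _); apply: eq_big_seq => x /ga [ga1 ga2];
  rewrite ?mulrNz (ga1, ga2) (mulrzAl, mulrzAr).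
Qed.

End FormalSums.

Section ClosedSets.
Variables (V : zmodType) (T : V -> Prop).
Hypotheses (T0 : T 0) (TD : forall x y, T x -> T y -> T (x + y)).

Lemma closed_sum (I : eqType) (l : seq I) (f : I -> V) :
  {in l, forall i, T (f i)} -> T (\sum_(i <- l) f i).
Proof. by move=> fT; rewrite big_seq; elim/big_rec: _ => // i x /fT; apply: TD. Qed.

Lemma closed_mulrn x n : T x -> T (x *+ n).
Proof. by move=> Tx; elim: n => [|n IH]; rewrite ?mulr0n // mulrS; apply: TD. Qed.

Lemma closed_mulrz (TN : forall x, T x -> T (- x)) x m : T x -> T (x *~ m).
Proof.
by case: m => n Tx; rewrite ?NegzE ?mulrNz; [|apply: TN]; apply: closed_mulrn.
Qed.

End ClosedSets.

Ltac fcoeff_simpl :=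
  move=> ?; rewrite /= ?(fcoeff_cat, fcoeff_scale, fcoeff_cons, fcoeff_nil) /=;
  repeat case: ifP => _; ring.

Section TensorRelations.
Variables (K : fieldType) (B : algType K) (P S Q : B -> Prop).
Implicit Types (s t : fsum B) (m : int).
Local Notation tzero := (tensor_zero P S Q).

Lemma tensor_zero_ext s t : fcoeff s =1 fcoeff t -> tzero s -> tzero t.
Proof. by move=> st [rs [rsR rsE]]; exists rs; split=> // k; rewrite -st. Qed.

Lemma tensor_zero_cat s t : tzero s -> tzero t -> tzero (s ++ t).
Proof.
move=> [rs [rsR rsE]] [rt [rtR rtE]]; exists (rs ++ rt); split.
  by move=> r; rewrite mem_cat => /orP [/rsR | /rtR].
by move=> k; rewrite fcoeff_cat big_cat rsE rtE.
Qed.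

Lemma tensor_zero_scale m s : tzero s -> tzero (fscale m s).
Proof.
move=> [rs [rsR rsE]]; exists [seq (m * r.1, r.2) | r <- rs]; split.
  by move=> _ /mapP [r /rsR rR ->].
move=> k; rewrite fcoeff_scale rsE big_map mulr_sumr.
by apply: eq_bigr => r _; rewrite mulrA.
Qed.

Lemma tensor_zero_rel r : tensor_rel P S Q r -> tzero r.
Proof.
move=> rR; exists [:: (1, r)]; split=> [r'|k]; last by rewrite big_seq1 mul1r.
by rewrite inE => /eqP ->.
Qed.

Lemma feval_tensor_zero g s :
  (forall r, tensor_rel P S Q r -> feval g r = 0) -> tzero s -> feval g s = 0.
Proof.
move=> gR [rs [rsR rsE]].
rewrite (@feval_ext _ _ g s (flatten [seq fscale r.1 r.2 | r <- rs])); last first.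
  move=> k; rewrite rsE fcoeff_flatten big_map.
  by apply: eq_bigr => r _; rewrite fcoeff_scale.
rewrite feval_flatten big_map big1_seq // => r /andP [_ /rsR rR].
by rewrite feval_scale gR ?mul0rz.
Qed.

Lemma fmul_tensor_rel r : tensor_rel P S Q r -> fmul r = 0.
Proof.
case=> [e1 e2 a _ _ _ | e a1 a2 _ _ _ | e c a _ _ _];
  rewrite /fmul !big_cons big_nil /= mulr1z !mulrN1z addr0 ?mulrDl ?mulrDr ?mulrA;
  by rewrite -?opprD subrr.
Qed.

Definition tensor_eqv s t := tzero (s ++ fscale (-1) t).

Lemma tensor_eqv_ext s t : fcoeff s =1 fcoeff t -> tensor_eqv s t.
Proof.
move=> st; apply: (@tensor_zero_ext [::]).
  by move=> k; rewrite fcoeff_nil fcoeff_cat fcoeff_scale st; ring.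
by exists [::]; split=> // k; rewrite fcoeff_nil big_nil.
Qed.

Lemma tensor_eqv_refl s : tensor_eqv s s.
Proof. exact: tensor_eqv_ext. Qed.

Lemma tensor_eqv_sym s t : tensor_eqv s t -> tensor_eqv t s.
Proof.
by move/(tensor_zero_scale (-1)); apply: tensor_zero_ext; fcoeff_simpl.
Qed.

Lemma tensor_eqv_trans t s u : tensor_eqv s t -> tensor_eqv t u -> tensor_eqv s u.
Proof.
by move=> st tu; apply: tensor_zero_ext (tensor_zero_cat st tu); fcoeff_simpl.
Qed.

Lemma tensor_eqv_scale m s t : tensor_eqv s t -> tensor_eqv (fscale m s) (fscale m t).
Proof. by move/(tensor_zero_scale m); apply: tensor_zero_ext; fcoeff_simpl. Qed.

Lemma tensor_eqv_cat s1 s2 t1 t2 :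
  tensor_eqv s1 t1 -> tensor_eqv s2 t2 -> tensor_eqv (s1 ++ s2) (t1 ++ t2).
Proof.
by move=> st1 st2; apply: tensor_zero_ext (tensor_zero_cat st1 st2); fcoeff_simpl.
Qed.

Lemma tensor_eqv_flatten (I : eqType) (l : seq I) (f g : I -> fsum B) :
  {in l, forall i, tensor_eqv (f i) (g i)} ->
  tensor_eqv (flatten (map f l)) (flatten (map g l)).
Proof.
elim: l => [|i l IH] fg /=; first exact: tensor_eqv_refl.
apply: tensor_eqv_cat; first by apply: fg; rewrite inE eqxx.
by apply: IH => j jl; apply: fg; rewrite inE jl orbT.
Qed.

Lemma tensor_eqv_zero s : tensor_eqv s [::] -> tzero s.
Proof. by apply: tensor_zero_ext; fcoeff_simpl. Qed.

Lemma feval_tensor_eqv g s t : (forall r, tensor_rel P S Q r -> feval g r = 0) ->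
  tensor_eqv s t -> feval g s = feval g t.
Proof.
move=> gR /(feval_tensor_zero gR) /eqP.
by rewrite feval_cat feval_scale mulrN1z subr_eq0 => /eqP.
Qed.

Lemma fmul_tensor_eqv s t : tensor_eqv s t -> fmul s = fmul t.
Proof. by rewrite !fmulE; apply/feval_tensor_eqv/fmul_tensor_rel. Qed.

Lemma tensor_eqv_rel m r s t : tensor_rel P S Q r ->
  (forall k, fcoeff s k - fcoeff t k = m * fcoeff r k) -> tensor_eqv s t.
Proof.
move=> /tensor_zero_rel/(tensor_zero_scale m) rz st.
by apply: tensor_zero_ext rz => k; rewrite fcoeff_cat !fcoeff_scale -st; ring.
Qed.


Section Additivity.
Hypotheses (P0 : P 0) (PD : forall x y, P x -> P y -> P (x + y)).
Hypotheses (Q0 : Q 0) (QD : forall x y, Q x -> Q y -> Q (x + y))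
  (QN : forall x, Q x -> Q (- x)).

Lemma tensor_eqv_zeror m e : P e -> tensor_eqv [:: (m, (e, 0))] [::].
Proof.
move=> Pe; move: (trel_addr S Pe Q0 Q0); rewrite addr0.
by move/(tensor_eqv_rel (m := - m)); apply; fcoeff_simpl.
Qed.

Lemma tensor_eqv_zerol m z : Q z -> tensor_eqv [:: (m, (0, z))] [::].
Proof.
move=> Qz; move: (trel_addl S P0 P0 Qz); rewrite addr0.
by move/(tensor_eqv_rel (m := - m)); apply; fcoeff_simpl.
Qed.

Lemma tensor_eqv_addr m e a b : P e -> Q a -> Q b ->
  tensor_eqv [:: (m, (e, a)); (m, (e, b))] [:: (m, (e, a + b))].
Proof.
by move=> Pe Qa Qb; apply: (tensor_eqv_rel (m := - m) (trel_addr S Pe Qa Qb)); fcoeff_simpl.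
Qed.

Lemma tensor_eqv_addl m x y z : P x -> P y -> Q z ->
  tensor_eqv [:: (m, (x + y, z))] [:: (m, (x, z)); (m, (y, z))].
Proof.
by move=> Px Py Qz; apply: (tensor_eqv_rel (m := m) (trel_addl S Px Py Qz)); fcoeff_simpl.
Qed.

Lemma tensor_eqv_oppr e b : P e -> Q b -> tensor_eqv [:: (-1, (e, b))] [:: (1, (e, - b))].
Proof.
move=> Pe Qb; have := trel_addr S Pe Qb (QN Qb); rewrite subrr => rel_b.
apply: (@tensor_eqv_trans ([:: (1, (e, - b))] ++ [:: (-1, (e, 0))])).
  by apply: (tensor_eqv_rel (m := 1) rel_b); fcoeff_simpl.
rewrite -[X in tensor_eqv _ X]cats0.
exact: tensor_eqv_cat (tensor_eqv_refl _) (tensor_eqv_zeror _ Pe).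
Qed.

Lemma tensor_eqv_mulrn e a n : P e -> Q a ->
  tensor_eqv [:: (n%:Z, (e, a))] [:: (1, (e, a *+ n))].
Proof.
move=> Pe Qa; elim: n => [|n IH].
  by rewrite mulr0n; apply: tensor_eqv_trans (tensor_eqv_sym (tensor_eqv_zeror 1 Pe));
    apply: tensor_eqv_ext; fcoeff_simpl.
apply: (@tensor_eqv_trans [:: (1, (e, a *+ n)); (1, (e, a))]).
  apply: (@tensor_eqv_trans ([:: (n%:Z, (e, a))] ++ [:: (1, (e, a))])).
    by apply: tensor_eqv_ext; rewrite -addn1 PoszD; fcoeff_simpl.
  exact: tensor_eqv_cat IH (tensor_eqv_refl _).
by rewrite mulrSr; apply: tensor_eqv_addr => //; apply: closed_mulrn.
Qed.

Lemma tensor_eqv_mulrz e a m : P e -> Q a ->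
  tensor_eqv [:: (m, (e, a))] [:: (1, (e, a *~ m))].
Proof.
move=> Pe Qa; case: m => n; first exact: tensor_eqv_mulrn.
rewrite NegzE mulrNz -pmulrn.
apply: (@tensor_eqv_trans (fscale (-1) [:: (n.+1%:Z, (e, a))])).
  by apply: tensor_eqv_ext; fcoeff_simpl.
apply: tensor_eqv_trans (tensor_eqv_scale (-1) (tensor_eqv_mulrn n.+1 Pe Qa)) _.
apply: (@tensor_eqv_trans [:: (-1, (e, a *+ n.+1))]).
  by apply: tensor_eqv_ext; fcoeff_simpl.
by apply: tensor_eqv_oppr => //; apply: closed_mulrn.
Qed.

Lemma tensor_eqv_sumr (I : eqType) (l : seq I) (mu : I -> int) e (f : I -> B) :
  P e -> {in l, forall i, Q (f i)} ->
  tensor_eqv [seq (mu i, (e, f i)) | i <- l] [:: (1, (e, \sum_(i <- l) f i *~ mu i))].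
Proof.
move=> Pe; elim: l => [|i l IH] Qf.
  by rewrite big_nil; apply: tensor_eqv_sym; apply: tensor_eqv_zeror.
have Qfi : Q (f i) by apply: Qf; rewrite inE eqxx.
have {}Qf : {in l, forall j, Q (f j)} by move=> j jl; apply: Qf; rewrite inE jl orbT.
rewrite big_cons map_cons -cat1s.
apply: (@tensor_eqv_trans ([:: (1, (e, f i *~ mu i))] ++
                             [:: (1, (e, \sum_(j <- l) f j *~ mu j))])).
  by apply: tensor_eqv_cat; [apply: tensor_eqv_mulrz | apply: IH].
apply: tensor_eqv_addr => //; first exact: closed_mulrz.
by apply: closed_sum => // j /Qf Qfj; apply: closed_mulrz.
Qed.

Lemma tensor_eqv_suml (I : eqType) (l : seq I) m (f : I -> B) z :
  {in l, forall i, P (f i)} -> Q z ->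
  tensor_eqv [:: (m, (\sum_(i <- l) f i, z))] [seq (m, (f i, z)) | i <- l].
Proof.
move=> + Qz; elim: l => [|i l IH] Pf; first by rewrite big_nil; apply: tensor_eqv_zerol.
have Pfi : P (f i) by apply: Pf; rewrite inE eqxx.
have {}Pf : {in l, forall j, P (f j)} by move=> j jl; apply: Pf; rewrite inE jl orbT.
rewrite big_cons map_cons -cat1s.
apply: tensor_eqv_trans (tensor_eqv_addl m Pfi (closed_sum P0 PD Pf) Qz) _.
by rewrite -cat1s; apply: tensor_eqv_cat (tensor_eqv_refl _) (IH Pf).
Qed.

End Additivity.

Lemma tensor_eqv_bal m e c a : P e -> S c -> Q a ->
  tensor_eqv [:: (m, (e * c, a))] [:: (m, (e, c * a))].
Proof.
by move=> Pe Sc Qa; apply: (tensor_eqv_rel (m := m) (trel_bal Pe Sc Qa)); fcoeff_simpl.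
Qed.

End TensorRelations.

Section Coordinates.
Variables (K : fieldType) (B : algType K) (P S : B -> Prop).
Variables (n : nat) (es : 'I_n -> B) (phi : 'I_n -> B -> B).
Hypotheses (phi_S : forall j x, P x -> S (phi j x))
  (PS_comm : forall x c, P x -> S c -> x * c = c * x).

Definition coord j (s : fsum B) : B := feval (fun e z => phi j e * z) s.

Section CoordinateFunctional.
Hypotheses (phiD : forall j x y, P x -> P y -> phi j (x + y) = phi j x + phi j y)
  (phiZ : forall j c x, S c -> P x -> phi j (c * x) = c * phi j x)
  (S_comm : forall c d, S c -> S d -> c * d = d * c).

Lemma coord_tensor_rel (Q : B -> Prop) j r : tensor_rel P S Q r -> coord j r = 0.
Proof.
case=> [e1 e2 a Pe1 Pe2 _ | e a1 a2 _ _ _ | e c a Pe Sc _];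
  rewrite /coord /feval !big_cons big_nil /= mulr1z !mulrN1z addr0.
- by rewrite phiD // mulrDl -opprD subrr.
- by rewrite mulrDr -opprD subrr.
by rewrite (PS_comm Pe Sc) phiZ // mulrA (S_comm Sc (phi_S j Pe)) subrr.
Qed.

Lemma coord_tensor_zero (Q : B -> Prop) j s : tensor_zero P S Q s -> coord j s = 0.
Proof. exact/feval_tensor_zero/coord_tensor_rel. Qed.

End CoordinateFunctional.

Section CoordinateExpansion.
Variable Q : B -> Prop.
Hypotheses (P0 : P 0) (PD : forall x y, P x -> P y -> P (x + y))
  (PM : forall c x, S c -> P x -> P (c * x)).
Hypotheses (Q0 : Q 0) (QD : forall x y, Q x -> Q y -> Q (x + y))
  (QN : forall x, Q x -> Q (- x)) (QM : forall c z, S c -> Q z -> Q (c * z)).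
Hypotheses (es_P : forall j, P (es j))
  (phi_decomp : forall x, P x -> x = \sum_(j < n) phi j x * es j).

Lemma tensor_eqv_coord s : supported P Q s ->
  tensor_eqv P S Q s [seq (1, (es j, coord j s)) | j <- index_enum 'I_n].
Proof.
move=> sPQ.
pose expand (y : int * (B * B)) :=
  [seq (y.1, (es j, phi j y.2.1 * y.2.2)) | j <- index_enum 'I_n].
pose block j := [seq (y.1, (es j, phi j y.2.1 * y.2.2)) | y <- s].
apply: (@tensor_eqv_trans _ _ _ _ _ (flatten [seq expand y | y <- s])).
  rewrite -[s in tensor_eqv _ _ _ s]map_id -[X in tensor_eqv _ _ _ X]flatten_map1.
  apply: tensor_eqv_flatten => [[m [e z]]] /sPQ /= [Pe Qz].
  rewrite {1}(phi_decomp Pe).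
  have Pf : {in index_enum 'I_n, forall j, P (phi j e * es j)}.
    by move=> j _; exact: PM (phi_S j Pe) (es_P j).
  apply: tensor_eqv_trans (tensor_eqv_suml S P0 PD m Pf Qz) _.
  rewrite -[X in tensor_eqv _ _ _ X _]flatten_map1.
  rewrite -[X in tensor_eqv _ _ _ _ X]flatten_map1.
  apply: tensor_eqv_flatten => j _.
  rewrite -(PS_comm (es_P j) (phi_S j Pe)) /=.
  exact: (tensor_eqv_bal m (es_P j) (phi_S j Pe) Qz).
apply: (@tensor_eqv_trans _ _ _ _ _ (flatten [seq block j | j <- index_enum 'I_n])).
  apply: tensor_eqv_ext => k; rewrite !fcoeff_flatten !big_map /fcoeff.
  rewrite /expand /block; under eq_bigr do rewrite big_map big_mkcond.
  under [RHS]eq_bigr do rewrite big_map big_mkcond.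
  exact: exchange_big.
rewrite -[X in tensor_eqv _ _ _ _ X]flatten_map1; apply: tensor_eqv_flatten => j _.
apply: tensor_eqv_sumr => // y /sPQ [Py Qy]; exact: QM (phi_S j Py) Qy.
Qed.

End CoordinateExpansion.

End Coordinates.

Section CenterOfModule.
Variables (K : fieldType) (B : algType K) (A E A' E' : B -> Prop).
Variables (n : nat) (es : 'I_n -> B) (phi : 'I_n -> B -> B).
Hypotheses (A_subalg : is_subalg A)
  (A'_central : forall c, A' c -> centralizer_in A A c)
  (E'_submod : is_submodule A' E')
  (E'_central : forall e, E' e -> centralizer_in A E e).
Hypotheses (es_E' : forall j, E' (es j)) (phi_A' : forall j x, E' x -> A' (phi j x))
  (phiD : forall j x y, E' x -> E' y -> phi j (x + y) = phi j x + phi j y)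
  (phiZ : forall j c x, A' c -> E' x -> phi j (c * x) = c * phi j x)
  (phi_decomp : forall x, E' x -> x = \sum_(j < n) phi j x * es j).
Hypothesis (E_iso : mult_iso E' A' A E).

Local Notation ZA := (centralizer_in A A).

Lemma subalg0 : A 0.
Proof. by case: A_subalg => A1 _ AZ _; rewrite -(scale0r (1 : B)); apply: AZ. Qed.

Lemma subalgN x : A x -> A (- x).
Proof. by case: A_subalg => _ _ AZ _ Ax; rewrite -scaleN1r; apply: AZ. Qed.

Lemma subalgD x y : A x -> A y -> A (x + y).
Proof. by case: A_subalg => _ + _ _; apply. Qed.

Lemma subalgM x y : A x -> A y -> A (x * y).
Proof. by case: A_subalg => _ _ _; apply. Qed.

Lemma center0 : ZA 0.
Proof. by split=> [|a _]; rewrite ?mul0r ?mulr0 //; apply: subalg0. Qed.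

Lemma centerD x y : ZA x -> ZA y -> ZA (x + y).
Proof.
move=> [Ax xC] [Ay yC]; split=> [|a Aa]; first exact: subalgD.
by rewrite mulrDl mulrDr xC ?yC.
Qed.

Lemma centerN x : ZA x -> ZA (- x).
Proof. by move=> [Ax xC]; split=> [|a Aa]; [apply: subalgN | rewrite mulNr mulrN xC]. Qed.

Lemma centerM x y : ZA x -> ZA y -> ZA (x * y).
Proof.
move=> [Ax xC] [Ay yC]; split=> [|a Aa]; first exact: subalgM.
by rewrite -mulrA yC // !mulrA xC.
Qed.

Lemma subalg_A' c : A' c -> A c.
Proof. by case/A'_central. Qed.

Lemma subalgM_A' c x : A' c -> A x -> A (c * x).
Proof. by move/subalg_A'; apply: subalgM. Qed.

Lemma centerM_A' c x : A' c -> ZA x -> ZA (c * x).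
Proof. by move/A'_central; apply: centerM. Qed.

Lemma E'_commA e a : E' e -> A a -> e * a = a * e.
Proof. by move=> /E'_central [_ eC] /eC. Qed.

Lemma E'_commA' e c : E' e -> A' c -> e * c = c * e.
Proof. by move=> E'e /subalg_A'; apply: E'_commA. Qed.

Lemma A'_comm c d : A' c -> A' d -> c * d = d * c.
Proof. by move=> /A'_central [_ cC] /subalg_A'/cC. Qed.

Lemma submod0 : E' 0.
Proof. by case: E'_submod. Qed.

Lemma submodD x y : E' x -> E' y -> E' (x + y).
Proof. by case: E'_submod => _ + _; apply. Qed.

Lemma submodM c x : A' c -> E' x -> E' (c * x).
Proof. by case: E'_submod => _ _; apply. Qed.

Lemma fmul_center s : supported E' ZA s -> centralizer_in A E (fmul s).
Proof.
case: E_iso => E_fmul _ _ sZ; split.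
  by apply: E_fmul => x /sZ [E'x [Ax _]].
move=> a Aa; rewrite /fmul mulr_suml mulr_sumr.
apply: eq_big_seq => x /sZ [E'x [_ xC]]; rewrite mulrzAl mulrzAr; congr (_ *~ _).
by rewrite -[LHS]mulrA xC // [LHS]mulrA (E'_commA E'x Aa) -mulrA.
Qed.

Lemma coord_center j s : supported E' A s ->
  (forall a, A a -> fmul s * a = a * fmul s) -> ZA (coord phi j s).
Proof.
case: E_iso => _ _ E_inj sA sC; split.
  rewrite /coord /feval; apply: (closed_sum subalg0 subalgD) => x /sA [E'x Ax].
  apply: (closed_mulrz subalg0 subalgD subalgN).
  exact: subalgM_A' (phi_A' j E'x) Ax.
move=> a Aa; apply/eqP; rewrite -subr_eq0.
have fcomm_supp : supported E' A (fcomm a s).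
  by move=> x; rewrite mem_cat => /orP [] /mapP [y /sA [E'y Ay] ->]; split=> //;
    apply: subalgM.
have fcomm0 : fmul (fcomm a s) = 0.
  rewrite fmulE feval_fcomm -?fmulE ?sC ?subrr // => x /sA [E'x _].
  by split; rewrite !mulrA // (E'_commA E'x Aa).
rewrite -[coord _ _ _]/(feval _ _) -feval_fcomm => [|x /sA [E'x _]].
  apply/eqP/(coord_tensor_zero phi_A' E'_commA' phiD phiZ A'_comm j).
  exact: E_inj fcomm_supp fcomm0.
have [_ phiC] := A'_central (phi_A' j E'x).
by split; rewrite !mulrA // phiC.
Qed.

Lemma center_fmul_surj x : centralizer_in A E x ->
  exists s, supported E' ZA s /\ fmul s = x.
Proof.
case: E_iso => _ E_surj _ [Ex xC]; have [s [sA sx]] := E_surj x Ex; subst x.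
exists [seq (1, (es j, coord phi j s)) | j <- index_enum 'I_n]; split.
  by move=> _ /mapP [j _ ->] /=; split; [exact: es_E' | exact: (coord_center j sA xC)].
apply/esym/fmul_tensor_eqv/(tensor_eqv_coord phi_A' E'_commA' submod0 submodD submodM
  subalg0 subalgD subalgN subalgM_A' es_E' phi_decomp sA).
Qed.

Lemma center_tensor_zero s :
  supported E' ZA s -> fmul s = 0 -> tensor_zero E' A' ZA s.
Proof.
case: E_iso => _ _ E_inj sZ s0.
have sA : supported E' A s by move=> x /sZ [E'x [Ax _]].
have coord0 j : coord phi j s = 0.
  exact: (coord_tensor_zero phi_A' E'_commA' phiD phiZ A'_comm j (E_inj s sA s0)).
apply/tensor_eqv_zero/(tensor_eqv_trans (tensor_eqv_coord phi_A' E'_commA'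
  submod0 submodD submodM center0 centerD centerN centerM_A' es_E' phi_decomp sZ)).
apply: (@tensor_eqv_trans _ _ _ _ _ (flatten [seq [::] | j <- index_enum 'I_n])).
  rewrite -[X in tensor_eqv _ _ _ X _]flatten_map1; apply: tensor_eqv_flatten => j _.
  by rewrite coord0; exact: (tensor_eqv_zeror _ center0 1 (es_E' j)).
by apply: tensor_eqv_ext => k; rewrite fcoeff_flatten big_map big1 ?fcoeff_nil.
Qed.

Lemma mult_iso_center : mult_iso E' A' ZA (centralizer_in A E).
Proof.
by split; [apply: fmul_center | apply: center_fmul_surj | apply: center_tensor_zero].
Qed.

End CenterOfModule.

Theorem proposition4p16 (K : fieldType) (B : algType K)
    (A : B -> Prop) (D : B) (A' E' : B -> Prop) :
  is_subalg A ->
  (* Assumption III' *)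
  is_subalg A' ->
  (forall c, A' c -> centralizer_in A A c) ->
  is_submodule A' E' ->
  (forall e, E' e -> centralizer_in A (one_forms A D) e) ->
  fg_projective A' E' ->
  mult_iso E' A' A (one_forms A D) ->
  (* conclusion: Z(E) = E' (x)_{A'} Z(A) via the multiplication map *)
  mult_iso E' A' (centralizer_in A A) (centralizer_in A (one_forms A D)).
Proof.
move=> A_subalg _ A'_central E'_submod E'_central.
move=> [n [es [phi [es_E' phi_A' phiD phiZ phi_decomp]]]] E_iso.
exact: (mult_iso_center A_subalg A'_central E'_submod E'_central
  es_E' phi_A' phiD phiZ phi_decomp E_iso).
Qed.
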